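(* Let $G$ be a normed group with a separately continuous and transitive Nikodym action on a non-meagre metric space $X$. Then for every $x\in X$ and every closed nowhere dense $F\subseteq X$, the set $W_{x,F}=\{\alpha\in G:\alpha(x)\notin F\}$ is dense and open in $G$. In particular, $G$ separates points from nowhere dense closed sets.
   Context: A normed group is a group with a group-norm $\|\cdot\|$ (subadditive, $\|t\|>0$ for $t\ne e_G$, $\|e_G\|=0$, $\|t^{-1}\|=\|t\|$), topologized by $d_R(s,t)=\|st^{-1}\|$. A separately continuous action $\varphi:G\times X\to X$ ($\varphi(e_G,x)=x$, $\varphi(gh,x)=\varphi(g,\varphi(h,x))$, write $g(x)=\varphi(g,x)$) has $x\mapsto g(x)$ continuous for each $g$ and $\varphi_x:g\mapsto g(x)$ continuous for each $x$; transitive means for all $x,y$ some $g$ has $g(x)=y$. Nikodym action: for every non-empty open neighbourhood $U$ of $e_G$ and every $x$, $Ux=\{u(x):u\in U\}$ contains a non-meagre set with the Baire property. *)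

From HB Require Import structures.
From mathcomp Require Import all_boot all_order all_algebra.
From mathcomp Require Import all_classical all_reals all_analysis.
Set Implicit Arguments. Unset Strict Implicit. Unset Printing Implicit Defensive.
Import Order.TTheory GRing.Theory Num.Theory.
Local Open Scope classical_set_scope.
Local Open Scope ring_scope.

Record normedGroup (R : realType) := NormedGroup {
  ng_car :> Type;
  ng_mul : ng_car -> ng_car -> ng_car;
  ng_inv : ng_car -> ng_car;
  ng_one : ng_car;
  ng_norm : ng_car -> R;
  ng_mulA : forall a b c, ng_mul a (ng_mul b c) = ng_mul (ng_mul a b) c;
  ng_mul1g : forall a, ng_mul ng_one a = a;
  ng_mulVg : forall a, ng_mul (ng_inv a) a = ng_one;
  ng_norm1 : ng_norm ng_one = 0;
  ng_norm_gt0 : forall t, t <> ng_one -> 0 < ng_norm t;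
  ng_normV : forall t, ng_norm (ng_inv t) = ng_norm t;
  ng_normM : forall s t, ng_norm (ng_mul s t) <= ng_norm s + ng_norm t
}.

Section NormedGroupTopology.
Variables (R : realType) (G : normedGroup R).

Definition dR (s t : G) : R := ng_norm (ng_mul s (ng_inv t)).

Definition G_open (U : set G) : Prop :=
  forall s, U s -> exists2 r : R, 0 < r & forall t, dR s t < r -> U t.

Definition G_dense (W : set G) : Prop :=
  forall U : set G, G_open U -> U !=set0 -> (U `&` W) !=set0.

Definition G_continuous (T : topologicalType) (f : G -> T) : Prop :=
  forall g (V : set T), nbhs (f g) V ->
    exists2 r : R, 0 < r & forall h, dR g h < r -> V (f h).
End NormedGroupTopology.

Section Category.
Variable T : topologicalType.

Definition nowhere_dense (A : set T) : Prop := (closure A)^° = set0.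

Definition meagre (A : set T) : Prop :=
  exists N : nat -> set T, (forall n, nowhere_dense (N n)) /\
    A `<=` \bigcup_n N n.

Definition baire_property (A : set T) : Prop :=
  exists2 U : set T, open U & meagre ((A `\` U) `|` (U `\` A)).
End Category.

Section Actions.
Variables (R : realType) (G : normedGroup R) (X : topologicalType).

Definition group_action (phi : G -> X -> X) : Prop :=
  (forall x, phi (ng_one G) x = x) /\
  (forall g h x, phi (ng_mul g h) x = phi g (phi h x)).

Definition separately_continuous (phi : G -> X -> X) : Prop :=
  (forall g, continuous (phi g)) /\
  (forall x, G_continuous (fun g => phi g x)).

Definition transitive_action (phi : G -> X -> X) : Prop :=
  forall x y, exists g, phi g x = y.

Definition nikodym_action (phi : G -> X -> X) : Prop :=
  forall U : set G, G_open U -> U (ng_one G) ->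
    forall x, exists2 A : set X, A `<=` [set phi u x | u in U] &
      ~ meagre A /\ baire_property A.
End Actions.

From HB Require Import structures.
From mathcomp Require Import all_boot all_order all_algebra.
From mathcomp Require Import all_classical all_reals all_analysis.
Import Order.TTheory GRing.Theory Num.Theory.
Local Open Scope classical_set_scope.
Local Open Scope ring_scope.

(* If an open set U of G had U x inside the nowhere dense set F, then the
   identity neighbourhood V = U s^-1 would satisfy V (s x) = U x ⊆ F; but the
   Nikodym property makes V (s x) contain a non-meagre set. *)

Section NormedGroupTheory.
Context {R : realType} {G : normedGroup R}.
Local Notation "a * b" := (ng_mul a b).
Local Notation "a ^-1" := (ng_inv a).
Local Notation one := (ng_one G).

Lemma ng_mulgV (a : G) : a * a^-1 = one.
Proof.
rewrite -[a * a^-1]ng_mul1g -[in X in X * _ = _](ng_mulVg (a^-1)).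
by rewrite -ng_mulA [_ * (a * _)]ng_mulA ng_mulVg ng_mul1g ng_mulVg.
Qed.

Lemma ng_mulg1 (a : G) : a * one = a.
Proof. by rewrite -(ng_mulVg a) ng_mulA ng_mulgV ng_mul1g. Qed.

Lemma ng_invM (t s : G) : (t * s)^-1 = s^-1 * t^-1.
Proof.
have h : (t * s) * (s^-1 * t^-1) = one.
  by rewrite -ng_mulA [s * (s^-1 * _)]ng_mulA ng_mulgV ng_mul1g ng_mulgV.
by rewrite -[LHS]ng_mulg1 -h ng_mulA ng_mulVg ng_mul1g.
Qed.

Lemma dR_mul2r (u t s : G) : dR (u * s) (t * s) = dR u t.
Proof.
by rewrite /dR ng_invM -ng_mulA [s * (s^-1 * _)]ng_mulA ng_mulgV ng_mul1g.
Qed.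

Lemma G_open_mulr (s : G) {U : set G} :
  G_open U -> G_open [set u | U (u * s)].
Proof.
move=> oU u /oU [r r0 hr]; exists r => // t ht.
by apply: hr; rewrite dR_mul2r.
Qed.

Lemma G_open_preimage {T : topologicalType} {f : G -> T} {V : set T} :
  G_continuous f -> open V -> G_open (f @^-1` V).
Proof.
move=> cf oV g Vfg; have [r r0 hr] := cf g V (open_nbhs_nbhs (conj oV Vfg)).
by exists r.
Qed.

End NormedGroupTheory.

Lemma nowhere_dense_subset_meagre {T : topologicalType} {A B : set T} :
  nowhere_dense A -> B `<=` A -> meagre B.
Proof. by move=> ndA BA; exists (fun=> A); split=> // y /BA Ay; exists 0%N. Qed.

Lemma nikodym_image_not_nowhere_dense {R : realType} {G : normedGroup R}
    {X : topologicalType} {phi : G -> X -> X} {U : set G} (x : X) {F : set X} :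
  group_action phi -> nikodym_action phi ->
  G_open U -> U !=set0 -> nowhere_dense F ->
  ~ [set phi u x | u in U] `<=` F.
Proof.
move=> phi_action phi_nikodym oU [s Us] ndF UxF.
have V1 : U (ng_mul (ng_one G) s) by rewrite ng_mul1g.
have [A AV [nmA _]] := phi_nikodym _ (G_open_mulr s oU) V1 (phi s x).
apply: nmA; apply: (nowhere_dense_subset_meagre ndF) => _ /AV [u Uus <-].
by rewrite -phi_action.2; apply: UxF; exists (ng_mul u s).
Qed.

Theorem mainTheorem10 (R : realType) (G : normedGroup R)
  (X : pseudoMetricType R) (hX : hausdorff_space X) (phi : G -> X -> X) :
  group_action phi ->
  separately_continuous phi ->
  transitive_action phi ->
  nikodym_action phi ->
  ~ meagre [set: X] ->
  forall (x : X) (F : set X), closed F -> nowhere_dense F ->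
    G_dense [set a : G | ~ F (phi a x)] /\ G_open [set a : G | ~ F (phi a x)].
Proof.
move=> hA [_ hC] _ hN _ x F cF ndF; split.
- move=> U oU U0; apply: contrapT => noW.
  apply: (nikodym_image_not_nowhere_dense x hA hN oU U0 ndF) => _ [u Uu <-].
  by apply: contrapT => nFu; apply: noW; exists u.
- exact: G_open_preimage (hC x) (closed_openC cF).
Qed.
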